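(* Let $\mathcal{R}$ be a PTRS and let $\mathfrak{P}=(V,E,L_{\mathcal{A}},L_{\mathcal{C}})$ be a well-formed solved proof tree whose root $v_1$ satisfies $L_{\mathcal{A}}(v_1)=\langle\mathcal{A}(\mathcal{R}),\mathcal{A}(\mathcal{R})\rangle$. Then $\iota_{\mathcal{R}}\sqsubseteq\max\{L_{\mathcal{C}}(v)\mid v\in V\}$.
   Context: PTRS: a finite set $\mathcal{R}$ of rules $\ell\to\{p_1:r_1,\dots,p_k:r_k\}$ over a finite signature $\Sigma$, $\ell$ not a variable, $0<p_j\le1$, $\sum p_j=1$, $\mathcal{V}(r_j)\subseteq\mathcal{V}(\ell)$. Defined symbols $\mathcal{D}$ = roots of left-hand sides; basic terms are $f(t_1,\dots,t_k)$ with $f\in\mathcal{D}$ and $t_i$ containing no defined symbols; $|t|$ is term size. Innermost rewriting: $s\to_{\mathcal{R}}\{p_j:s[r_j\sigma]_\pi\}$ if $s|_\pi=\ell\sigma$ and all proper subterms of $\ell\sigma$ are $\mathcal{R}$-normal forms. A rewrite sequence tree (RST) is a possibly infinite, finitely branching tree with nodes labeled $(p_v:t_v)$, root probability 1, and $t_v\to_{\mathcal{R}}\{\tfrac{p_w}{p_v}:t_w\}_{w\text{ child}}$ for inner nodes; $\operatorname{edl}(\mathfrak{T})=\sum_{v\text{ inner}}p_v$; $\operatorname{edh}_{\mathcal{R}}(t)=\sup$ of $\operatorname{edl}$ over RSTs with root $t$; $\operatorname{eirc}_{\mathcal{R}}(n)=\sup\{\operatorname{edh}_{\mathcal{R}}(t)\mid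 t\text{ basic},|t|\le n\}$; $\iota_{\mathcal{R}}=\iota(\operatorname{eirc}_{\mathcal{R}})$. Complexities $\mathfrak{C}=\{\mathrm{Pol}_0,\mathrm{Pol}_1,\dots,\mathrm{Exp},\mathrm{2\text{-}Exp},\mathrm{Fin},\omega\}$ ordered $\mathrm{Pol}_0\sqsubset\mathrm{Pol}_1\sqsubset\dots\sqsubset\mathrm{Exp}\sqsubset\mathrm{2\text{-}Exp}\sqsubset\mathrm{Fin}\sqsubset\omega$, $\oplus$ = maximum; $\iota(f)=\mathrm{Pol}_a$ for least $a$ with $f\in O(n^a)$, else $\mathrm{Exp}$ if $f\in O(2^{\mathrm{pol}(n)})$, else $\mathrm{2\text{-}Exp}$ if $f\in O(2^{2^{\mathrm{pol}(n)}})$, else $\mathrm{Fin}$ if $f$ never equals $\omega$, else $\omega$. Annotated dependency pairs: fresh symbols $f^\sharp$ for $f\in\mathcal{D}$; $\flat$ removes annotations, $\sharp_{\mathcal{D}}(t)$ annotates all defined symbols, $\flat^\uparrow_\pi$ removes annotations strictly above $\pi$, $t^\sharp$ annotates the root. An ADP is $\ell\to\{p_1:r_1,\dots,p_k:r_k\}^m$ with $r_j$ possibly annotated and flag $m\in\{\mathsf{true},\mathsf{false}\}$. $\mathcal{A}(\mathcal{R})=\{\ell\to\{p_1:\sharp_{\mathcal{D}}(r_1),\dots,p_k:\sharp_{\mathcal{D}}(r_k)\}^{\mathsf{true}}\mid \ell\to\{p_1:r_1,\dots\}\in\mathcal{R}\}$. Rewriting with a set $\mathcal{P}$ of ADPs: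 at a position $\pi$ with defined or annotated symbol, ADP $\ell\to\{p_j:r_j\}^m\in\mathcal{P}$, $\sigma$ with $\flat(s|_\pi)=\ell\sigma$ having only normal-form proper subterms: $t_j=s[r_j\sigma]_\pi$ (at: $m=\mathsf{true}$, $\pi$ annotated), $s[\flat(r_j)\sigma]_\pi$ (nt), $\flat^\uparrow_\pi(s[r_j\sigma]_\pi)$ (af: $m=\mathsf{false}$, annotated), $\flat^\uparrow_\pi(s[\flat(r_j)\sigma]_\pi)$ (nf). $\mathcal{P}$-chain trees are defined like RSTs with this relation. For $\mathcal{S}\subseteq\mathcal{P}$: $\operatorname{edl}_{\langle\mathcal{P},\mathcal{S}\rangle}(\mathfrak{T})$ sums $p_v$ over inner nodes rewritten by (at)/(af)-steps with ADPs from $\mathcal{S}$; $\operatorname{edh}_{\langle\mathcal{P},\mathcal{S}\rangle}(t)$ = supremum over chain trees with root $t^\sharp$ for basic $t$; $\iota_{\langle\mathcal{P},\mathcal{S}\rangle}=\iota(n\mapsto\sup\{\operatorname{edh}_{\langle\mathcal{P},\mathcal{S}\rangle}(t)\mid t\text{ basic},|t|\le n\})$. ADP problems $\langle\mathcal{P},\mathcal{S}\rangle$ ($\mathcal{S}\subseteq\mathcal{P}$, solved iff $\mathcal{S}=\emptyset$); processors map an ADP problem to a complexity and a finite set of ADP problems. A proof tree $(V,E,L_{\mathcal{A}},L_{\mathcal{C}})$ is a finite tree labeling nodes with ADP problems and complexities such that at each inner node $v$ with children $w_i$ some processor maps $L_{\mathcal{A}}(v)$ to $(L_{\mathcal{C}}(v),\{L_{\mathcal{A}}(w_i)\})$,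 and leaves carry $\mathrm{Pol}_0$ if solved, $\omega$ otherwise; it is solved if all leaf problems are solved. It is well formed if for every node $v$ with $L_{\mathcal{A}}(v)=\langle\mathcal{P},\mathcal{S}\rangle$ and root path $v_1,\dots,v_k=v$: $\iota_{\langle\mathcal{P},\mathcal{S}\rangle}\sqsubseteq L_{\mathcal{C}}(v_1)\oplus\dots\oplus L_{\mathcal{C}}(v_{k-1})\oplus\max\{L'_{\mathcal{C}}(w)\mid w$ reachable from $v$ including $v\}$ and $\iota_{\langle\mathcal{P},\mathcal{P}\setminus\mathcal{S}\rangle}\sqsubseteq L_{\mathcal{C}}(v_1)\oplus\dots\oplus L_{\mathcal{C}}(v_{k-1})$, with $L'_{\mathcal{C}}=L_{\mathcal{C}}$ on inner nodes and $L'_{\mathcal{C}}(w)=\iota_{L_{\mathcal{A}}(w)}$ on leaves (empty $\oplus$ is $\mathrm{Pol}_0$). *)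

From Stdlib Require Import Reals List Permutation Arith.
From Stdlib Require Import ClassicalDescription ClassicalEpsilon.
From Coquelicot Require Import Rbar Lub.
Import ListNotations.
Set Implicit Arguments.
Unset Strict Implicit.
Local Open Scope R_scope.

Inductive term (F : Type) : Type :=
| Var : nat -> term F
| Fn  : F -> list (term F) -> term F.
Arguments Var {F} _.
Arguments Fn {F} _ _.

Section Terms.
Variable F : Type.

Fixpoint tsize (t : term F) : nat :=
  match t with
  | Var _ => 1
  | Fn _ ts => S (fold_right plus 0%nat (map tsize ts))
  end.

Fixpoint vars (t : term F) : list nat :=
  match t with
  | Var x => [x]
  | Fn _ ts => flat_map vars ts
  end.

Fixpoint subst (t : term F) (sigma : nat -> term F) : term F :=
  match t with
  | Var x => sigma x
  | Fn f ts => Fn f (map (fun u => subst u sigma) ts)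
  end.

Fixpoint wf_term (ar : F -> nat) (t : term F) : Prop :=
  match t with
  | Var _ => True
  | Fn f ts => length ts = ar f /\ fold_right and True (map (wf_term ar) ts)
  end.

Fixpoint syms (t : term F) : list F :=
  match t with
  | Var _ => []
  | Fn f ts => f :: flat_map syms ts
  end.

(* positions are lists of (0-based) argument indices *)
Fixpoint subterm_at (t : term F) (p : list nat) : option (term F) :=
  match p with
  | [] => Some t
  | i :: p' =>
      match t with
      | Var _ => None
      | Fn _ ts =>
          match nth_error ts i with
          | Some u => subterm_at u p'
          | None => None
          end
      end
  end.

Fixpoint list_upd (A : Type) (l : list A) (i : nat) (g : A -> A) : list A :=
  match l, i with
  | [], _ => []
  | x :: l', O => g x :: l'
  | x :: l', S i' => x :: list_upd l' i' g
  end.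

Fixpoint replace_at (t : term F) (p : list nat) (u : term F) : term F :=
  match p with
  | [] => u
  | i :: p' =>
      match t with
      | Var x => Var x
      | Fn f ts => Fn f (list_upd ts i (fun v => replace_at v p' u))
      end
  end.

Definition root_sym (t : term F) : option F :=
  match t with Var _ => None | Fn f _ => Some f end.
End Terms.

Fixpoint map_term (F G : Type) (g : F -> G) (t : term F) : term G :=
  match t with
  | Var x => Var x
  | Fn f ts => Fn (g f) (map (map_term g) ts)
  end.

Section PTRS.
Variable Sg : Type.
Variable ar : Sg -> nat.

Record rule := mkRule { lhs : term Sg ; rhs : list (R * term Sg) }.

Definition sumR (l : list (R * term Sg)) : R := fold_right (fun pr acc => fst pr + acc) 0 l.

Definition is_rule (r : rule) : Prop :=
  (exists f ts, lhs r = Fn f ts) /\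
  wf_term ar (lhs r) /\
  (forall p t, In (p, t) (rhs r) -> 0 < p <= 1 /\ wf_term ar t /\ incl (vars t) (vars (lhs r))) /\
  sumR (rhs r) = 1.

Definition is_PTRS (Rs : list rule) : Prop := forall r, In r Rs -> is_rule r.

Definition defined (Rs : list rule) (f : Sg) : Prop :=
  exists r, In r Rs /\ root_sym (lhs r) = Some f.

Definition basic (Rs : list rule) (t : term Sg) : Prop :=
  wf_term ar t /\
  exists f ts, t = Fn f ts /\ defined Rs f /\
    forall u, In u ts -> forall g, In g (syms u) -> ~ defined Rs g.

Definition NF (Rs : list rule) (t : term Sg) : Prop :=
  ~ exists r p sigma, In r Rs /\ subterm_at t p = Some (subst (lhs r) sigma).

Definition proper_subterms_NF (Nf : term Sg -> Prop) (t : term Sg) : Prop :=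
  forall p u, p <> [] -> subterm_at t p = Some u -> Nf u.

(* innermost rewrite step s ->_R {p_1:t_1,...,p_k:t_k} (multidistribution as a list) *)
Definition istep (Rs : list rule) (s : term Sg) (mu : list (R * term Sg)) : Prop :=
  exists r p sigma,
    In r Rs /\ subterm_at s p = Some (subst (lhs r) sigma) /\
    proper_subterms_NF (NF Rs) (subst (lhs r) sigma) /\
    Permutation mu (map (fun pt => (fst pt, replace_at s p (subst (snd pt) sigma))) (rhs r)).
End PTRS.

(* nodes are addresses (list of child indices from the root)           *)
Record ltree (L : Type) := mkTree
  { nch : list nat -> nat ;       (* number of children; 0 = leaf *)
    prb : list nat -> R ;
    lab : list nat -> L }.

Inductive is_node (ch : list nat -> nat) : list nat -> Prop :=
| node_root : is_node ch []
| node_child : forall v i, is_node ch v -> (i < ch v)%nat -> is_node ch (v ++ [i]).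

Definition children (ch : list nat -> nat) (v : list nat) : list (list nat) :=
  map (fun i => v ++ [i]) (seq 0 (ch v)).

Fixpoint level (ch : list nat -> nat) (n : nat) : list (list nat) :=
  match n with
  | O => [[]]
  | S n' => flat_map (children ch) (level ch n')
  end.

Definition ind (P : Prop) : R := if excluded_middle_informative P then 1 else 0.

(* sum over all nodes v satisfying [counted v] of p_v, i.e. the supremum of
   the partial sums over the (finitely many) nodes of depth < d *)
Definition wsum (L : Type) (T : ltree L) (counted : list nat -> Prop) : Rbar :=
  Lub_Rbar (fun x => exists d,
     x = fold_right Rplus 0
           (map (fun v => ind (counted v) * prb T v)
              (flat_map (level (nch T)) (seq 0 d)))).

Definition inner (L : Type) (T : ltree L) (v : list nat) : Prop := (0 < nch T v)%nat.

Definition child_dist (L : Type) (T : ltree L) (v : list nat) : list (R * L) :=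
  map (fun w => (prb T w / prb T v, lab T w)) (children (nch T) v).

Section RST.
Variable Sg : Type.
Variable ar : Sg -> nat.
Variable Rs : list (rule Sg).

Definition is_RST (T : ltree (term Sg)) (t : term Sg) : Prop :=
  prb T [] = 1 /\ lab T [] = t /\
  forall v, is_node (nch T) v -> inner T v -> istep Rs (lab T v) (child_dist T v).

Definition edl (T : ltree (term Sg)) : Rbar := wsum T (inner T).

Definition edh (t : term Sg) : Rbar :=
  Rbar_lub (fun x => exists T, is_RST T t /\ x = edl T).

Definition eirc (n : nat) : Rbar :=
  Rbar_lub (fun x => exists t, basic ar Rs t /\ (tsize t <= n)%nat /\ x = edh t).
End RST.

Inductive cplx := Pol (a : nat) | CExp | C2Exp | CFin | COmega.

Definition crank (c : cplx) : nat :=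
  match c with Pol _ => 0 | CExp => 1 | C2Exp => 2 | CFin => 3 | COmega => 4 end.

Definition cleb (c d : cplx) : bool :=
  match c, d with
  | Pol a, Pol b => Nat.leb a b
  | _, _ => Nat.leb (crank c) (crank d)
  end.

Definition cle (c d : cplx) : Prop := cleb c d = true.

Definition cmax (c d : cplx) : cplx := if cleb c d then d else c.

Definition bigO (f : nat -> Rbar) (g : nat -> R) : Prop :=
  exists (c : R) (N : nat), forall n, (N <= n)%nat -> Rbar_le (f n) (Finite (c * g n)).

Definition peval (cs : list R) (n : nat) : R :=
  fold_right (fun c acc => c + INR n * acc) 0 cs.

Definition in_Pol (f : nat -> Rbar) (a : nat) : Prop := bigO f (fun n => INR n ^ a).
Definition in_Exp (f : nat -> Rbar) : Prop :=
  exists cs, bigO f (fun n => Rpower 2 (peval cs n)).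
Definition in_2Exp (f : nat -> Rbar) : Prop :=
  exists cs, bigO f (fun n => Rpower 2 (Rpower 2 (peval cs n))).
Definition never_omega (f : nat -> Rbar) : Prop := forall n, f n <> p_infty.

Definition iota (f : nat -> Rbar) : cplx :=
  if excluded_middle_informative (exists a, in_Pol f a) then
    Pol (epsilon (inhabits 0%nat)
           (fun a => in_Pol f a /\ forall b, in_Pol f b -> (a <= b)%nat))
  else if excluded_middle_informative (in_Exp f) then CExp
  else if excluded_middle_informative (in_2Exp f) then C2Exp
  else if excluded_middle_informative (never_omega f) then CFin
  else COmega.

Definition iota_R (Sg : Type) (ar : Sg -> nat) (Rs : list (rule Sg)) : cplx :=
  iota (eirc ar Rs).

(* annotated terms: symbols paired with an annotation flag (true = f#) *)
Section ADP.
Variable Sg : Type.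
Variable ar : Sg -> nat.
Variable Rs : list (rule Sg).

Definition aterm := term (Sg * bool).

Definition embed (t : term Sg) : aterm := map_term (fun f => (f, false)) t.
Definition erase (t : aterm) : term Sg := map_term fst t.
Definition flat (t : aterm) : aterm := embed (erase t).
Definition sharpD (t : term Sg) : aterm :=
  map_term (fun f => (f, if excluded_middle_informative (defined Rs f) then true else false)) t.
Definition sharp_root (t : term Sg) : aterm :=
  match t with
  | Var x => Var x
  | Fn f ts => Fn (f, true) (map embed ts)
  end.
Fixpoint flat_above (p : list nat) (t : aterm) : aterm :=
  match p with
  | [] => t
  | i :: p' =>
      match t with
      | Var x => Var x
      | Fn fb ts => Fn (fst fb, false) (list_upd ts i (flat_above p'))
      end
  end.

Definition asubst (t : aterm) (sigma : nat -> term Sg) : aterm :=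
  subst t (fun x => embed (sigma x)).

Record adp := mkADP { alhs : term Sg ; arhs : list (R * aterm) ; aflag : bool }.

Definition A_R : list adp :=
  map (fun r => mkADP (lhs r) (map (fun pt => (fst pt, sharpD (snd pt))) (rhs r)) true) Rs.

Definition NF_P (P : adp -> Prop) (t : term Sg) : Prop :=
  ~ exists a p sigma, P a /\ subterm_at t p = Some (subst (alhs a) sigma).

Definition is_annotated (u : aterm) : bool :=
  match u with Var _ => false | Fn fb _ => snd fb end.

Definition adp_step (P : adp -> Prop) (s : aterm) (a : adp) (b : bool)
    (mu : list (R * aterm)) : Prop :=
  P a /\
  exists p u sigma,
    subterm_at s p = Some u /\
    (exists fb us, u = Fn fb us /\ (defined Rs (fst fb) \/ snd fb = true)) /\
    erase u = subst (alhs a) sigma /\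
    proper_subterms_NF (NF_P P) (subst (alhs a) sigma) /\
    b = is_annotated u /\
    Permutation mu
      (map (fun pt =>
         (fst pt,
          match aflag a, b with
          | true, true => replace_at s p (asubst (snd pt) sigma)                       (* at *)
          | true, false => replace_at s p (asubst (flat (snd pt)) sigma)               (* nt *)
          | false, true => flat_above p (replace_at s p (asubst (snd pt) sigma))       (* af *)
          | false, false => flat_above p (replace_at s p (asubst (flat (snd pt)) sigma)) (* nf *)
          end)) (arhs a)).

(* chain trees: labels are (term, ADP used, annotation flag of the rewritten position) *)
Definition is_chain_tree (P : adp -> Prop) (T : ltree (aterm * adp * bool)) (t : aterm) : Prop :=
  prb T [] = 1 /\ fst (fst (lab T [])) = t /\
  forall v, is_node (nch T) v -> inner T v ->
    adp_step P (fst (fst (lab T v))) (snd (fst (lab T v))) (snd (lab T v))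
      (map (fun pl => (fst pl, fst (fst (snd pl)))) (child_dist T v)).

(* nodes rewritten by (at)/(af) steps with ADPs from S *)
Definition edl_PS (S : adp -> Prop) (T : ltree (aterm * adp * bool)) : Rbar :=
  wsum T (fun v => inner T v /\ snd (lab T v) = true /\ S (snd (fst (lab T v)))).

Definition edh_PS (P S : adp -> Prop) (t : term Sg) : Rbar :=
  Rbar_lub (fun x => exists T, is_chain_tree P T (sharp_root t) /\ x = edl_PS S T).

Definition iota_PS (P S : adp -> Prop) : cplx :=
  iota (fun n => Rbar_lub (fun x => exists t, basic ar Rs t /\ (tsize t <= n)%nat /\ x = edh_PS P S t)).

(* ADP problems <P, S>, finite sets represented by lists *)
Record problem := mkProb { pP : list adp ; pS : list adp }.

Definition solved (pb : problem) : Prop := forall a, ~ In a (pS pb).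

Definition iota_prob (pb : problem) : cplx :=
  iota_PS (fun a => In a (pP pb)) (fun a => In a (pS pb)).
Definition iota_prob_compl (pb : problem) : cplx :=
  iota_PS (fun a => In a (pP pb)) (fun a => In a (pP pb) /\ ~ In a (pS pb)).

Inductive ptree := PNode (LA : problem) (LC : cplx) (kids : list ptree).

Definition plabel (t : ptree) : problem := match t with PNode p _ _ => p end.

Fixpoint is_proof_tree (t : ptree) : Prop :=
  match t with
  | PNode p c ks =>
      incl (pS p) (pP p) /\
      (ks = [] -> (solved p -> c = Pol 0) /\ (~ solved p -> c = COmega)) /\
      (ks <> [] -> exists proc : problem -> cplx * list problem,
                     proc p = (c, map plabel ks)) /\
      fold_right and True (map is_proof_tree ks)
  end.

Fixpoint ptree_solved (t : ptree) : Prop :=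
  match t with
  | PNode p _ [] => solved p
  | PNode _ _ ks => fold_right and True (map ptree_solved ks)
  end.

Fixpoint maxLC' (t : ptree) : cplx :=
  match t with
  | PNode p _ [] => iota_prob p
  | PNode _ c ks => fold_right cmax c (map maxLC' ks)
  end.

Fixpoint maxLC (t : ptree) : cplx :=
  match t with
  | PNode _ c ks => fold_right cmax c (map maxLC ks)
  end.

(* acc = L_C(v_1) ⊕ ... ⊕ L_C(v_{k-1}) along the root path *)
Fixpoint wf_from (acc : cplx) (t : ptree) : Prop :=
  match t with
  | PNode p c ks =>
      cle (iota_prob p) (cmax acc (maxLC' t)) /\
      cle (iota_prob_compl p) acc /\
      fold_right and True (map (wf_from (cmax acc c)) ks)
  end.

Definition well_formed (t : ptree) : Prop := wf_from (Pol 0) t.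

Definition same_set (l1 l2 : list adp) : Prop := forall a, In a l1 <-> In a l2.
End ADP.

(* An innermost rewrite sequence tree of a basic term [t] lifts, node by node, to
   an A(R)-chain tree of [t#] with the same shape and probabilities.  The invariant
   is that every subterm with a defined root which is not a normal form is
   annotated: then the redex of an innermost step is annotated, the step is an
   (at)-step with the dependency pair of the rule used, and the invariant survives
   because right-hand sides are annotated by sharp_D and instantiated by normal
   forms.  Every inner node is thus counted, so edh_R(t) <= edh_<A(R),A(R)>(t) and
   iota_R is bounded by the complexity of the root problem.  Well-formedness at the
   root bounds that by the maximum of L'_C, which on a solved tree is at most the
   maximum of L_C since solved leaves have complexity Pol_0. *)

From Pilot Require Import Defs.
From Stdlib Require Import List Reals Permutation Lia Wf_nat.
From Stdlib Require Import Classical ClassicalEpsilon.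
From Coquelicot Require Import Rbar Lub.
Import ListNotations.
Set Implicit Arguments.
Unset Strict Implicit.

Lemma cle_refl c : cle c c.
Proof. destruct c; unfold cle; simpl; try apply Nat.leb_refl; reflexivity. Qed.

Lemma cle_trans a b c : cle a b -> cle b c -> cle a c.
Proof.
  unfold cle; destruct a, b, c; simpl; intros Hab Hbc;
    rewrite ?Nat.leb_le in *; try lia; easy.
Qed.

Lemma cle_total a b : cle a b \/ cle b a.
Proof.
  unfold cle; destruct a, b; simpl; auto.
  rewrite !Nat.leb_le; lia.
Qed.

Lemma cle_Pol0 c : cle (Pol 0) c.
Proof. now destruct c. Qed.

Lemma cmax_Pol0l c : cmax (Pol 0) c = c.
Proof. unfold cmax. now rewrite (cle_Pol0 c). Qed.

Lemma cle_maxl a b : cle a (cmax a b).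
Proof. unfold cmax. destruct (cleb a b) eqn:E; [exact E | apply cle_refl]. Qed.

Lemma cle_maxr a b : cle b (cmax a b).
Proof.
  unfold cmax. destruct (cleb a b) eqn:E; [apply cle_refl |].
  destruct (cle_total a b) as [H | H]; [unfold cle in H; congruence | exact H].
Qed.

Lemma cmax_lub a b c : cle a c -> cle b c -> cle (cmax a b) c.
Proof. unfold cmax; now destruct (cleb a b). Qed.

Lemma cmax_mono a b c d : cle a c -> cle b d -> cle (cmax a b) (cmax c d).
Proof.
  intros Hac Hbd. apply cmax_lub.
  - exact (cle_trans Hac (cle_maxl c d)).
  - exact (cle_trans Hbd (cle_maxr c d)).
Qed.

Definition in_class (f : nat -> Rbar) (c : cplx) : Prop :=
  match c with
  | Pol a => in_Pol f a
  | CExp => in_Exp f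
  | C2Exp => in_2Exp f
  | CFin => never_omega f
  | COmega => True
  end.

Lemma bigO_le f g h : (forall n, Rbar_le (f n) (g n)) -> bigO g h -> bigO f h.
Proof.
  intros Hfg [c [N H]]. exists c, N. intros n Hn.
  exact (Rbar_le_trans _ _ _ (Hfg n) (H n Hn)).
Qed.

Lemma in_class_le f g c :
  (forall n, Rbar_le (f n) (g n)) -> in_class g c -> in_class f c.
Proof.
  intros Hfg; destruct c; simpl; auto.
  - apply bigO_le, Hfg.
  - intros [cs Hg]. exists cs. eapply bigO_le; eassumption.
  - intros [cs Hg]. exists cs. eapply bigO_le; eassumption.
  - intros Hg n Hn. apply (Hg n). specialize (Hfg n). rewrite Hn in Hfg.
    now destruct (g n).
Qed.

Lemma iota_Pol f : (exists a, in_Pol f a) ->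
  exists a, iota f = Pol a /\ in_Pol f a /\ forall b, in_Pol f b -> (a <= b)%nat.
Proof.
  intros HPol.
  set (least := fun a => in_Pol f a /\ forall b, in_Pol f b -> (a <= b)%nat).
  assert (Hleast : exists a, least a).
  { destruct (dec_inh_nat_subset_has_unique_least_element _ (fun n => classic _) HPol)
      as [a [Ha _]].
    now exists a. }
  exists (epsilon (inhabits 0%nat) least).
  split; [| exact (epsilon_spec _ _ Hleast)].
  unfold iota. now destruct excluded_middle_informative.
Qed.

Lemma in_class_iota f : in_class f (iota f).
Proof.
  destruct (classic (exists a, in_Pol f a)) as [HPol | HPol].
  - now destruct (iota_Pol HPol) as (a & -> & Ha & _).
  - unfold iota; repeat destruct excluded_middle_informative; simpl; tauto.
Qed.

Lemma iota_least f c : in_class f c -> cle (iota f) c.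
Proof.
  destruct (classic (exists a, in_Pol f a)) as [HPol | HPol].
  - destruct (iota_Pol HPol) as (a & -> & _ & Hmin).
    destruct c; simpl; intros Hc; try reflexivity.
    now apply Nat.leb_le, Hmin.
  - intros Hc. unfold iota.
    repeat destruct excluded_middle_informative; try tauto;
      destruct c; simpl in Hc; try reflexivity; exfalso; eauto.
Qed.

Lemma Rbar_lub_ub (E : Rbar -> Prop) x : E x -> Rbar_le x (Rbar_lub E).
Proof. exact (proj1 (proj2_sig (Rbar_ex_lub E)) x). Qed.

Lemma Rbar_lub_least (E : Rbar -> Prop) b :
  (forall x, E x -> Rbar_le x b) -> Rbar_le (Rbar_lub E) b.
Proof. exact (proj2 (proj2_sig (Rbar_ex_lub E)) b). Qed.

Lemma iota_le f g : (forall n, Rbar_le (f n) (g n)) -> cle (iota f) (iota g).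
Proof. intros Hfg. apply iota_least, (in_class_le Hfg), in_class_iota. Qed.

Lemma fold_and_Forall (A : Type) (Q : A -> Prop) l :
  fold_right and True (map Q l) <-> Forall Q l.
Proof.
  induction l as [| x l IH]; simpl; split; intros H; auto.
  - destruct H; constructor; tauto.
  - inversion H; subst; split; tauto.
Qed.

Lemma map_list_upd (A B : Type) (h : A -> B) (g : A -> A) (g' : B -> B) l i :
  (forall x, h (g x) = g' (h x)) -> map h (list_upd l i g) = list_upd (map h l) i g'.
Proof. intros H; revert i; induction l; intros [| i]; simpl; f_equal; auto. Qed.

Lemma Forall_list_upd (A : Type) (Q : A -> Prop) (g : A -> A) l i :
  Forall Q l -> (forall x, nth_error l i = Some x -> Q (g x)) -> Forall Q (list_upd l i g).
Proof.
  revert i; induction l; intros [| i] Hl Hg; simpl; auto;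
    inversion Hl; subst; constructor; auto.
Qed.

Lemma Permutation_map_factor (A B C : Type) (k : A -> B) (e : B -> C) l mu :
  Permutation mu (map (fun x => e (k x)) l) ->
  exists mu', Permutation mu' (map k l) /\ map e mu' = mu.
Proof.
  intros H. destruct (Permutation_map_inv _ _ H) as [l' [-> Hl]].
  exists (map k l'). split.
  - apply Permutation_map, Permutation_sym, Hl.
  - now rewrite map_map.
Qed.

Lemma map_nth_seq_self (A : Type) (l : list A) d :
  map (fun i => nth i l d) (seq 0 (length l)) = l.
Proof.
  apply nth_ext with (d := nth 0 l d) (d' := d); rewrite ?length_map, ?length_seq; auto.
  intros i Hi. rewrite (map_nth (fun j => nth j l d) _ 0%nat), seq_nth; auto.
Qed.

Fixpoint term_ind' (F : Type) (Q : term F -> Prop)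
  (HV : forall x, Q (Var x)) (HF : forall f ts, Forall Q ts -> Q (Fn f ts)) (t : term F) : Q t :=
  match t with
  | Var x => HV x
  | Fn f ts => HF f ts ((fix go (l : list (term F)) : Forall Q l :=
      match l with
      | [] => Forall_nil _
      | u :: l' => Forall_cons _ (term_ind' HV HF u) (go l')
      end) ts)
  end.

Lemma map_term_comp (A B C : Type) (f : A -> B) (g : B -> C) t :
  map_term g (map_term f t) = map_term (fun x => g (f x)) t.
Proof.
  induction t using term_ind'; simpl; auto.
  f_equal. rewrite map_map. induction H; simpl; f_equal; auto.
Qed.

Lemma map_term_id (A : Type) (f : A -> A) t : (forall x, f x = x) -> map_term f t = t.
Proof.
  intros Hf. induction t using term_ind'; simpl; auto.
  rewrite Hf. f_equal. induction H; simpl; f_equal; auto.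
Qed.

Lemma subterm_at_app (F : Type) (t : term F) q q' :
  subterm_at t (q ++ q') =
  match subterm_at t q with Some u => subterm_at u q' | None => None end.
Proof.
  revert t; induction q as [| i q IH]; intros t; simpl; auto.
  destruct t; auto. destruct (nth_error l i); auto.
Qed.

Lemma subterm_at_subst_var (F : Type) (t : term F) sigma x :
  In x (vars t) ->
  exists q, subterm_at t q = Some (Var x) /\ subterm_at (subst t sigma) q = Some (sigma x).
Proof.
  induction t as [y | f ts IH] using term_ind'; simpl; intros Hx.
  - destruct Hx as [<- | []]. now exists [].
  - apply in_flat_map in Hx as [u [Hu Hx]].
    destruct (In_nth_error _ _ Hu) as [i Hi].
    rewrite Forall_forall in IH. destruct (IH u Hu Hx) as [q [Hq1 Hq2]].
    exists (i :: q). simpl. now rewrite Hi, nth_error_map, Hi.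
Qed.

Lemma subst_var_proper_subterm (F : Type) (Q : term F -> Prop) (l : term F) sigma x :
  (exists f ts, l = Fn f ts) -> proper_subterms_NF Q (subst l sigma) ->
  In x (vars l) -> Q (sigma x).
Proof.
  intros [f [ts ->]] HQ Hx.
  destruct (subterm_at_subst_var sigma Hx) as [q [Hq1 Hq2]].
  apply (HQ q); auto. intros ->. discriminate.
Qed.

Section Annotations.
Variable Sg : Type.
Variable Rs : list (rule Sg).

Lemma erase_embed (t : term Sg) : erase (embed t) = t.
Proof. unfold erase, embed. rewrite map_term_comp. now apply map_term_id. Qed.

Lemma erase_sharpD (t : term Sg) : erase (sharpD Rs t) = t.
Proof. unfold erase, sharpD. rewrite map_term_comp. now apply map_term_id. Qed.

Lemma erase_sharp_root (t : term Sg) : erase (sharp_root t) = t.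
Proof.
  destruct t as [x | f ts]; [reflexivity |]. unfold erase; simpl. f_equal.
  rewrite map_map. rewrite <- (map_id ts) at 2. apply map_ext, erase_embed.
Qed.

Lemma erase_asubst (t : aterm Sg) sigma : erase (asubst t sigma) = subst (erase t) sigma.
Proof.
  induction t as [x | fb ts IH] using term_ind'; simpl.
  - apply erase_embed.
  - unfold erase, asubst in *; simpl. f_equal. rewrite !map_map.
    induction IH; simpl; f_equal; auto.
Qed.

Lemma erase_replace_at p (s w : aterm Sg) :
  erase (replace_at s p w) = replace_at (erase s) p (erase w).
Proof.
  revert s; induction p as [| i p IH]; intros s; simpl; auto.
  destruct s; simpl; auto. unfold erase; simpl. f_equal. now apply map_list_upd.
Qed.

Lemma subterm_at_erase p (s : aterm Sg) :
  subterm_at (erase s) p = option_map (@erase Sg) (subterm_at s p).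
Proof.
  revert s; induction p as [| i p IH]; intros s; simpl; auto.
  destruct s; simpl; auto. unfold erase at 1; simpl.
  rewrite nth_error_map. destruct (nth_error l i); simpl; auto.
  apply IH.
Qed.

Lemma NF_subterm (t u : term Sg) q : NF Rs t -> subterm_at t q = Some u -> NF Rs u.
Proof.
  intros Ht Hq [r [p [sigma [Hr Hp]]]]. apply Ht. exists r, (q ++ p), sigma.
  now rewrite subterm_at_app, Hq.
Qed.

Lemma redex_not_NF r sigma : In r Rs -> ~ NF Rs (subst (lhs r) sigma).
Proof. intros Hr H. apply H. now exists r, [], sigma. Qed.

Fixpoint annotated_nonNF (t : aterm Sg) : Prop :=
  match t with
  | Var _ => True
  | Fn fb us => (defined Rs (fst fb) -> ~ NF Rs (erase (Fn fb us)) -> snd fb = true) /\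
                fold_right and True (map annotated_nonNF us)
  end.

Lemma annotated_nonNF_subterm p (s u : aterm Sg) :
  annotated_nonNF s -> subterm_at s p = Some u -> annotated_nonNF u.
Proof.
  revert s; induction p as [| i p IH]; intros s Hs Hp; simpl in Hp.
  - congruence.
  - destruct s as [| fb us]; [discriminate |].
    destruct (nth_error us i) eqn:E; [| discriminate].
    destruct Hs as [_ Hs]. apply fold_and_Forall in Hs. rewrite Forall_forall in Hs.
    eapply IH; eauto. apply Hs. eapply nth_error_In; eauto.
Qed.

(* The ancestors of the non-normal subterm [u] are non-normal, hence already annotated. *)
Lemma annotated_nonNF_replace_at p (s u w : aterm Sg) :
  subterm_at s p = Some u -> ~ NF Rs (erase u) ->
  annotated_nonNF s -> annotated_nonNF w -> annotated_nonNF (replace_at s p w).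
Proof.
  revert s; induction p as [| i p IH]; intros s Hp Hu Hs Hw; simpl in *; auto.
  destruct s as [| fb us]; auto.
  destruct (nth_error us i) eqn:E; [| discriminate].
  destruct Hs as [Hroot Hs]. apply fold_and_Forall in Hs. split.
  - intros Hd _. apply Hroot; auto. intros HN. apply Hu.
    apply (NF_subterm (q := i :: p) HN). rewrite subterm_at_erase. simpl. now rewrite E, Hp.
  - apply fold_and_Forall, Forall_list_upd; auto.
    intros x Hx. rewrite E in Hx. injection Hx as <-. eapply IH; eauto.
    rewrite Forall_forall in Hs. apply Hs. eapply nth_error_In; eauto.
Qed.

Lemma annotated_nonNF_embed_NF (t : term Sg) : NF Rs t -> annotated_nonNF (embed t).
Proof.
  induction t as [x | f ts IH] using term_ind'; simpl; auto. intros HN. split.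
  - intros _ H'. exfalso. apply H'. change (NF Rs (erase (embed (Fn f ts)))).
    now rewrite erase_embed.
  - apply fold_and_Forall. rewrite Forall_map. rewrite Forall_forall in *.
    intros u Hu. apply IH; auto. destruct (In_nth_error _ _ Hu) as [i Hi].
    apply (NF_subterm (q := [i]) HN). simpl. now rewrite Hi.
Qed.

Lemma annotated_nonNF_embed_constructor (t : term Sg) :
  (forall g, In g (syms t) -> ~ defined Rs g) -> annotated_nonNF (embed t).
Proof.
  induction t as [x | f ts IH] using term_ind'; simpl; auto. intros Hc. split.
  - intros Hd. exfalso. apply (Hc f); auto.
  - apply fold_and_Forall. rewrite Forall_map. rewrite Forall_forall in *.
    intros u Hu. apply IH; auto. intros g Hg. apply Hc. right. apply in_flat_map. eauto.
Qed.

Lemma annotated_nonNF_sharp_root (ar : Sg -> nat) (t : term Sg) :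
  basic ar Rs t -> annotated_nonNF (sharp_root t).
Proof.
  intros [_ [f [ts [-> [_ Hts]]]]]. split; [reflexivity |].
  apply fold_and_Forall. rewrite Forall_map, Forall_forall.
  intros u Hu. now apply annotated_nonNF_embed_constructor, Hts.
Qed.

Lemma annotated_nonNF_asubst_sharpD (r : term Sg) sigma :
  (forall x, In x (vars r) -> NF Rs (sigma x)) -> annotated_nonNF (asubst (sharpD Rs r) sigma).
Proof.
  induction r as [x | f ts IH] using term_ind'; simpl; intros Hx.
  - apply annotated_nonNF_embed_NF. auto.
  - split.
    + simpl. intros Hd _. now destruct excluded_middle_informative.
    + apply fold_and_Forall. rewrite !Forall_map. rewrite Forall_forall in *.
      intros u Hu. apply IH; auto. intros y Hy. apply Hx. apply in_flat_map. eauto.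
Qed.
End Annotations.

Lemma level_is_node ch n v : In v (level ch n) -> is_node ch v.
Proof.
  revert v; induction n as [| n IH]; simpl; intros v Hv.
  - destruct Hv as [<- | []]. constructor.
  - apply in_flat_map in Hv as [w [Hw Hv]]. unfold children in Hv.
    apply in_map_iff in Hv as [i [<- Hi]]. apply in_seq in Hi.
    constructor; auto. lia.
Qed.

Lemma ind_iff (A B : Prop) : (A <-> B) -> Defs.ind A = Defs.ind B.
Proof.
  intros H. unfold Defs.ind.
  destruct (excluded_middle_informative A), (excluded_middle_informative B); tauto.
Qed.

Lemma wsum_ext (L1 L2 : Type) (T1 : ltree L1) (T2 : ltree L2) c1 c2 :
  nch T1 = nch T2 -> prb T1 = prb T2 ->
  (forall v, is_node (nch T1) v -> c1 v <-> c2 v) -> wsum T1 c1 = wsum T2 c2.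
Proof.
  intros Hn Hp Hc. unfold wsum. rewrite <- Hn, <- Hp. apply Lub_Rbar_eqset.
  assert (E : forall l, (forall v, In v l -> is_node (nch T1) v) ->
    map (fun v => Defs.ind (c1 v) * prb T1 v) l = map (fun v => Defs.ind (c2 v) * prb T1 v) l).
  { intros l Hl. apply map_ext_in. intros v Hv. now rewrite (ind_iff (Hc v (Hl v Hv))). }
  assert (Hnodes : forall d v, In v (flat_map (level (nch T1)) (seq 0 d)) -> is_node (nch T1) v).
  { intros d v Hv. apply in_flat_map in Hv as [n [_ Hv]]. exact (level_is_node Hv). }
  intros x; split; intros [d ->]; exists d; now rewrite E by apply Hnodes.
Qed.

Lemma wsum_nowhere (L : Type) (T : ltree L) c : (forall v, ~ c v) -> Rbar_le (wsum T c) 0.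
Proof.
  intros Hc. apply (proj2 (Lub_Rbar_correct _)). intros x [d ->]. simpl.
  induction (flat_map (level (nch T)) (seq 0 d)) as [| v l IH]; simpl; [apply Rle_refl |].
  unfold Defs.ind at 1. destruct excluded_middle_informative as [Hv | _].
  - now destruct (Hc v Hv).
  - now rewrite Rmult_0_l, Rplus_0_l.
Qed.

Lemma length_child_dist (L : Type) (T : ltree L) v : length (child_dist T v) = nch T v.
Proof. unfold child_dist, children. now rewrite !length_map, length_seq. Qed.

Lemma nth_child_dist (L : Type) (T : ltree L) v i d :
  (i < nch T v)%nat -> nth i (child_dist T v) d = (prb T (v ++ [i]) / prb T v, lab T (v ++ [i])).
Proof.
  intros Hi. unfold child_dist, children. rewrite map_map.
  rewrite nth_indep with (d' := (prb T (v ++ [0%nat]) / prb T v, lab T (v ++ [0%nat])))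
    by now rewrite length_map, length_seq.
  rewrite (map_nth (fun j => (prb T (v ++ [j]) / prb T v, lab T (v ++ [j])))).
  now rewrite seq_nth.
Qed.

(** * Lifting rewrite sequence trees to chain trees *)

Section Simulation.
Variable Sg : Type.
Variable ar : Sg -> nat.
Variable Rs : list (rule Sg).
Hypothesis HR : is_PTRS ar Rs.
Variables P S : adp Sg -> Prop.
Hypothesis HP : forall a, P a <-> In a (A_R Rs).
Hypothesis HS : forall a, In a (A_R Rs) -> S a.

Definition erase_pr (pt : R * aterm Sg) : R * term Sg := (fst pt, erase (snd pt)).

Definition adp_of_rule (r : rule Sg) : adp Sg :=
  mkADP (lhs r) (map (fun pt => (fst pt, sharpD Rs (snd pt))) (rhs r)) true.

Lemma NF_NF_P t : NF Rs t -> NF_P P t.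
Proof.
  intros H [a [p [sigma [Ha Hp]]]]. apply HP, in_map_iff in Ha as [r [<- Hr]].
  apply H. now exists r, p, sigma.
Qed.

Lemma annotated_redex s p r sigma :
  annotated_nonNF Rs s -> In r Rs -> subterm_at (erase s) p = Some (subst (lhs r) sigma) ->
  exists fb us, subterm_at s p = Some (Fn fb us) /\ erase (Fn fb us) = subst (lhs r) sigma /\
    defined Rs (fst fb) /\ snd fb = true.
Proof.
  intros Hs Hr Hsub. destruct (HR Hr) as [[f [ts Hlhs]] _].
  rewrite subterm_at_erase in Hsub.
  destruct (subterm_at s p) as [u |] eqn:Eu; [| discriminate]. injection Hsub as Hu.
  destruct u as [x | fb us]; [rewrite Hlhs in Hu; discriminate |].
  assert (Hdef : defined Rs (fst fb)).
  { exists r. split; auto. rewrite Hlhs in Hu |- *. now injection Hu as -> _. }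
  exists fb, us. repeat split; auto.
  destruct (annotated_nonNF_subterm Hs Eu) as [Hann _]. apply Hann; auto.
  rewrite Hu. now apply redex_not_NF.
Qed.

Lemma istep_lift s mu :
  annotated_nonNF Rs s -> istep Rs (erase s) mu ->
  exists a mu', In a (A_R Rs) /\ adp_step Rs P s a true mu' /\
    map erase_pr mu' = mu /\ Forall (fun pt => annotated_nonNF Rs (snd pt)) mu'.
Proof.
  intros Hs [r [p [sigma [Hr [Hsub [Hnf Hperm]]]]]].
  destruct (HR Hr) as [Hlhs [_ [Hrhs _]]].
  destruct (annotated_redex Hs Hr Hsub) as (fb & us & Eu & Hu & Hdef & Hann).
  set (k := fun pt : R * term Sg => (fst pt, replace_at s p (asubst (sharpD Rs (snd pt)) sigma))).
  assert (Hk : forall pt, erase_pr (k pt) = (fst pt, replace_at (erase s) p (subst (snd pt) sigma))).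
  { intros pt. unfold erase_pr, k; simpl. now rewrite erase_replace_at, erase_asubst, erase_sharpD. }
  rewrite <- (map_ext _ _ Hk) in Hperm.
  destruct (Permutation_map_factor Hperm) as [mu' [Hmu' Herase]].
  assert (HA : In (adp_of_rule r) (A_R Rs)) by now apply in_map.
  exists (adp_of_rule r), mu'. split; [exact HA |]. split; [| split; [exact Herase |]].
  - split; [now apply HP |].
    exists p, (Fn fb us), sigma. split; [exact Eu |]. split; [now exists fb, us; auto |].
    split; [exact Hu |]. split.
    { intros q w Hq Hw. exact (NF_NF_P (Hnf q w Hq Hw)). }
    split; [simpl; now rewrite Hann |].
    simpl. now rewrite map_map.
  - apply Forall_forall. intros pt Hpt.
    apply (Permutation_in _ Hmu'), in_map_iff in Hpt as [[pr rt] [<- Hin]].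
    apply annotated_nonNF_replace_at with (Fn fb us); auto.
    + rewrite Hu. now apply redex_not_NF.
    + apply annotated_nonNF_asubst_sharpD. intros x Hx.
      apply (subst_var_proper_subterm Hlhs Hnf).
      destruct (Hrhs pr rt Hin) as (_ & _ & Hvars). now apply Hvars.
Qed.

Section LiftTree.
Variable T : ltree (term Sg).
Variable t : term Sg.
Hypothesis Hbasic : basic ar Rs t.
Hypothesis HT : is_RST Rs T t.

Definition lifts_step v s (x : adp Sg * list (R * aterm Sg)) : Prop :=
  In (fst x) (A_R Rs) /\ adp_step Rs P s (fst x) true (snd x) /\
  map erase_pr (snd x) = child_dist T v /\ Forall (fun pt => annotated_nonNF Rs (snd pt)) (snd x).

Definition lift_step v s : adp Sg * list (R * aterm Sg) :=
  epsilon (inhabits (mkADP (Var 0) [] true, [])) (lifts_step v s).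

Definition lift_child (acc : list nat * aterm Sg) (i : nat) : list nat * aterm Sg :=
  (fst acc ++ [i], snd (nth i (snd (lift_step (fst acc) (snd acc))) (0%R, Var 0))).

Definition lift_term (v : list nat) : aterm Sg :=
  snd (fold_left lift_child v ([], sharp_root t)).

Definition lift_tree : ltree (aterm Sg * adp Sg * bool) :=
  mkTree (nch T) (prb T) (fun v => (lift_term v, fst (lift_step v (lift_term v)), true)).

Lemma fold_lift_child_fst v acc : fst (fold_left lift_child v acc) = fst acc ++ v.
Proof.
  revert acc; induction v as [| i v IH]; intros acc; simpl; [now rewrite app_nil_r |].
  rewrite IH. simpl. now rewrite <- app_assoc.
Qed.

Lemma lift_term_snoc v i :
  lift_term (v ++ [i]) = snd (nth i (snd (lift_step v (lift_term v))) (0%R, Var 0)).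
Proof. unfold lift_term. rewrite fold_left_app. simpl. now rewrite fold_lift_child_fst. Qed.

Lemma nth_lifted v mu' i :
  map erase_pr mu' = child_dist T v -> (i < nch T v)%nat ->
  erase_pr (nth i mu' (0%R, Var 0)) = (prb T (v ++ [i]) / prb T v, lab T (v ++ [i])).
Proof.
  intros H Hi. rewrite <- (nth_child_dist (0%R, Var 0) Hi), <- H.
  symmetry. exact (map_nth erase_pr mu' (0%R, Var 0) i).
Qed.

Lemma lift_step_spec v s :
  is_node (nch T) v -> inner T v -> annotated_nonNF Rs s -> erase s = lab T v ->
  lifts_step v s (lift_step v s).
Proof.
  intros Hv Hin Hs Her. unfold lift_step. apply epsilon_spec. destruct HT as (_ & _ & Hstep).
  pose proof (Hstep v Hv Hin) as Hv_step. rewrite <- Her in Hv_step.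
  destruct (istep_lift Hs Hv_step) as (a & mu' & Hlift). now exists (a, mu').
Qed.

Lemma lift_term_spec v :
  is_node (nch T) v -> annotated_nonNF Rs (lift_term v) /\ erase (lift_term v) = lab T v.
Proof.
  induction 1 as [| v i Hv [Hs Her] Hi].
  - split; [exact (annotated_nonNF_sharp_root Hbasic) |].
    unfold lift_term; simpl. rewrite erase_sharp_root. symmetry. exact (proj1 (proj2 HT)).
  - destruct (lift_step_spec Hv ltac:(unfold inner; lia) Hs Her) as (_ & _ & Hmap & Hall).
    rewrite lift_term_snoc. set (mu' := snd (lift_step v (lift_term v))) in *.
    assert (Hlen : length mu' = nch T v) by now rewrite <- length_child_dist, <- Hmap, length_map.
    split.
    + rewrite Forall_forall in Hall. apply Hall, nth_In. lia.
    + pose proof (nth_lifted Hmap Hi) as E. now injection E.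
Qed.

Lemma lift_tree_chain : is_chain_tree Rs P lift_tree (sharp_root t).
Proof.
  split; [exact (proj1 HT) |]. split; [reflexivity |].
  intros v Hv Hin; simpl.
  destruct (lift_term_spec Hv) as [Hs Her].
  destruct (lift_step_spec Hv Hin Hs Her) as (_ & Hstep & Hmap & _).
  set (mu' := snd (lift_step v (lift_term v))) in *.
  assert (Hlen : length mu' = nch T v) by now rewrite <- length_child_dist, <- Hmap, length_map.
  enough (E : map (fun pl => (fst pl, fst (fst (snd pl)))) (child_dist lift_tree v) = mu')
    by now rewrite E.
  rewrite <- (map_nth_seq_self mu' (0%R, Var 0)), Hlen.
  unfold child_dist, children; simpl. rewrite !map_map. apply map_ext_in.
  intros i Hi. apply in_seq in Hi.
  assert (Hi_lt : (i < nch T v)%nat) by lia.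
  pose proof (nth_lifted Hmap Hi_lt) as E. injection E as E1 _.
  simpl. rewrite lift_term_snoc, <- E1. symmetry. apply surjective_pairing.
Qed.

Lemma edl_lift_tree : edl T = edl_PS S lift_tree.
Proof.
  apply wsum_ext; auto. intros v Hv. unfold inner; simpl. split; [| tauto].
  intros Hin. repeat split; auto.
  destruct (lift_term_spec Hv) as [Hs Her].
  apply HS, (lift_step_spec Hv Hin Hs Her).
Qed.
End LiftTree.

Lemma edh_le_edh_PS t : basic ar Rs t -> Rbar_le (edh Rs t) (edh_PS Rs P S t).
Proof.
  intros Hb. apply Rbar_lub_subset. intros x [T [HT ->]].
  exists (lift_tree T t). split; [exact (lift_tree_chain Hb HT) | exact (edl_lift_tree Hb HT)].
Qed.

Lemma iota_R_le_iota_PS : cle (iota_R ar Rs) (iota_PS ar Rs P S).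
Proof.
  apply iota_le. intros n. apply Rbar_lub_least. intros x (t & Hb & Hn & ->).
  apply (Rbar_le_trans _ _ _ (edh_le_edh_PS Hb)). apply Rbar_lub_ub. now exists t.
Qed.
End Simulation.

Fixpoint ptree_ind' (Sg : Type) (Q : ptree Sg -> Prop)
  (H : forall p c ks, Forall Q ks -> Q (PNode p c ks)) (t : ptree Sg) : Q t :=
  match t with
  | PNode p c ks => H p c ks ((fix go (l : list (ptree Sg)) : Forall Q l :=
      match l with
      | [] => Forall_nil _
      | u :: l' => Forall_cons _ (ptree_ind' H u) (go l')
      end) ks)
  end.

Lemma iota_prob_solved (Sg : Type) (ar : Sg -> nat) (Rs : list (rule Sg)) p :
  solved p -> cle (iota_prob ar Rs p) (Pol 0).
Proof.
  intros Hs. apply iota_least. exists 0%R, 0%nat. intros n _. rewrite Rmult_0_l.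
  apply Rbar_lub_least. intros x (t & _ & _ & ->).
  apply Rbar_lub_least. intros y (T & _ & ->).
  apply wsum_nowhere. intros v (_ & _ & Hv). exact (Hs _ Hv).
Qed.

Lemma fold_cmax_mono (A : Type) (f g : A -> cplx) c l :
  Forall (fun x => cle (f x) (g x)) l ->
  cle (fold_right cmax c (map f l)) (fold_right cmax c (map g l)).
Proof.
  induction 1; simpl; [apply cle_refl |]. now apply cmax_mono.
Qed.

Lemma maxLC'_le_maxLC (Sg : Type) (ar : Sg -> nat) (Rs : list (rule Sg)) (t : ptree Sg) :
  ptree_solved t -> cle (maxLC' ar Rs t) (maxLC t).
Proof.
  induction t as [p c ks IH] using ptree_ind'. intros Hs.
  destruct ks as [| k ks].
  - exact (cle_trans (iota_prob_solved ar Rs Hs) (cle_Pol0 c)).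
  - apply fold_cmax_mono. apply fold_and_Forall in Hs.
    rewrite Forall_forall in *. intros u Hu. now apply IH, Hs.
Qed.

Theorem mainTheorem4 (Sg : Type) (ar : Sg -> nat)
  (Sg_finite : exists l : list Sg, forall f : Sg, In f l)
  (Rs : list (rule Sg)) (HR : is_PTRS ar Rs)
  (PT : ptree Sg)
  (Hpt : is_proof_tree PT)
  (Hwf : well_formed ar Rs PT)
  (Hsolved : ptree_solved PT)
  (Hroot : same_set (pP (plabel PT)) (A_R Rs) /\ same_set (pS (plabel PT)) (A_R Rs)) :
  cle (iota_R ar Rs) (maxLC PT).
Proof.
  destruct Hroot as [HP HS].
  assert (Hsim : cle (iota_R ar Rs) (iota_prob ar Rs (plabel PT)))
    by exact (iota_R_le_iota_PS HR HP (fun a => proj2 (HS a))).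
  assert (Hroot_wf : cle (iota_prob ar Rs (plabel PT)) (maxLC' ar Rs PT)).
  { destruct PT as [p c ks]. destruct Hwf as [Hw _]. now rewrite cmax_Pol0l in Hw. }
  exact (cle_trans Hsim (cle_trans Hroot_wf (maxLC'_le_maxLC ar Rs Hsolved))).
Qed.
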